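(* Let $G_{\lambda,k}$ be a skeleton of a connected graph $G$ with natural map $f$, and let $P_1,P_2$ be paths in $G_{\lambda,k}$ such that $d(u,v)>1$ for all vertices $u\in P_1$, $v\in P_2$. Then, for $M=\min\{\lambda,k\}$, $N_{M/2}(f^{-1}(P_1))\cap N_{M/2}(f^{-1}(P_2))=\emptyset$.
   Context: $d$ is the graph metric. $N_r(S)=\{y: d(s,y)<r\text{ for some } s\in S\}$ (in $G$). A set $X$ is $k$-connected if any two of its points are joined by a finite sequence in $X$ with consecutive distances $\le k$. Skeleton $G_{\lambda,k}$ (root $x_0\in V(G)$, scale $\lambda\ge1$, connectivity $k\ge1$): layers $A_{N,\lambda}=\{x: N\lambda<d(x,x_0)\le(N+1)\lambda\}$, $N\in\mathbb Z$; blocks are the maximal $k$-connected subsets of layers; $G_{\lambda,k}$ has a vertex per block and an edge between two blocks iff an edge of $G$ joins them. The natural map $f$ sends each vertex of $G$ to its block; $f^{-1}(P)$ is the union of the blocks that are vertices of $P$. *)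

From Stdlib Require Import Reals List ZArith ClassicalEpsilon.
Import ListNotations.
Open Scope R_scope.

Section Graphs.
Context {T : Type} (adj : T -> T -> Prop).

Inductive walkn : T -> T -> nat -> Prop :=
| walk0 x : walkn x x 0
| walkS x y z n : adj x y -> walkn y z n -> walkn x z (S n).

(* graph distance: the least length of a walk (meaningful for connected graphs) *)
Definition gdist (x y : T) : nat :=
  epsilon (inhabits 0%nat)
    (fun n => walkn x y n /\ forall m, walkn x y m -> (n <= m)%nat).

Definition connected_graph : Prop := forall x y, exists n, walkn x y n.

Fixpoint chain (p : list T) : Prop :=
  match p with
  | x :: ((y :: _) as t) => adj x y /\ chain t
  | _ => True
  end.

Definition is_path (p : list T) : Prop := p <> [] /\ NoDup p /\ chain p.

Definition nbhd (S : T -> Prop) (r : R) (y : T) : Prop :=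
  exists s, S s /\ INR (gdist s y) < r.
End Graphs.

Section Skeleton.
Context {V : Type} (adj : V -> V -> Prop) (x0 : V) (lam k : R).

Definition layer (N : Z) (x : V) : Prop :=
  IZR N * lam < INR (gdist adj x x0) <= (IZR N + 1) * lam.

Inductive kseq (X : V -> Prop) : V -> V -> Prop :=
| kseq0 a : X a -> kseq X a a
| kseqS a b c : X a -> INR (gdist adj a b) <= k -> kseq X b c -> kseq X a c.

Definition k_connected (X : V -> Prop) : Prop :=
  forall a b, X a -> X b -> kseq X a b.

Definition is_block (B : V -> Prop) : Prop :=
  exists N : Z,
    (forall x, B x -> layer N x) /\ (exists x, B x) /\ k_connected B /\
    (forall C : V -> Prop, (forall x, B x -> C x) -> (forall x, C x -> layer N x) ->
        k_connected C -> forall x, C x -> B x).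

(* vertices of the skeleton G_{lambda,k} *)
Definition block : Type := { B : V -> Prop | is_block B }.

Definition sk_adj (b1 b2 : block) : Prop :=
  b1 <> b2 /\ exists x y, proj1_sig b1 x /\ proj1_sig b2 y /\ adj x y.

(* f^{-1}(P): union of the blocks that are vertices of P *)
Definition preim (P : list block) (x : V) : Prop :=
  exists b, In b P /\ proj1_sig b x.
End Skeleton.

(* Two points at distance less than M = min(lambda, k) lie in the same block or in
   adjacent blocks of the skeleton.  Their layer indices differ by at most one,
   since the distance to x0 is 1-Lipschitz and M <= lambda.  In the same layer
   they are within k of each other, so by maximality they share a block.  In
   consecutive layers, a geodesic between them crosses the layer boundary along
   an edge (u, v); u and v lie within k of the endpoints in their own layers, so
   they belong to the two blocks, which are therefore joined by the edge (u, v).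
   Thus if y were within M/2 of both f^-1(P1) and f^-1(P2), some vertex of P1
   and some vertex of P2 would be at skeleton distance at most 1. *)

From Pilot Require Import Defs.
From Stdlib Require Import Reals List ZArith Lra Lia Wf_nat Classical
  ClassicalEpsilon FunctionalExtensionality PropExtensionality ProofIrrelevance.
Open Scope R_scope.

Section Walks.
Context {T : Type} (adj : T -> T -> Prop).

Lemma gdist_minimal x y n : walkn adj x y n ->
  walkn adj x y (gdist adj x y) /\
  forall m, walkn adj x y m -> (gdist adj x y <= m)%nat.
Proof.
  intros W. unfold gdist. apply epsilon_spec.
  destruct (dec_inh_nat_subset_has_unique_least_element (walkn adj x y))
    as [m [Hm _]].
  - intros m. apply classic.
  - now exists n.
  - now exists m.
Qed.

Lemma gdist_le x y n : walkn adj x y n -> (gdist adj x y <= n)%nat.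
Proof. intros W. now apply (gdist_minimal x y n W). Qed.

Lemma gdist_le_1 x y : x = y \/ adj x y -> (gdist adj x y <= 1)%nat.
Proof.
  intros [-> | A].
  - pose proof (gdist_le y y 0 (walk0 adj y)). lia.
  - apply gdist_le. econstructor; [exact A | constructor].
Qed.

Lemma walk_cat x y z n m :
  walkn adj x y n -> walkn adj y z m -> walkn adj x z (n + m).
Proof. induction 1; intros; simpl; auto. econstructor; eauto. Qed.

Lemma walk_exit (P : T -> Prop) a b n : walkn adj a b n -> P a -> ~ P b ->
  exists u v i j, walkn adj a u i /\ P u /\ adj u v /\ ~ P v /\
    walkn adj v b j /\ (i + S j = n)%nat.
Proof.
  induction 1 as [x | x y z n Axy W IH]; intros Pa Pb; [contradiction |].
  destruct (classic (P y)) as [Py | Py].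
  - destruct (IH Py Pb) as (u & v & i & j & Wu & Pu & Auv & Pv & Wv & E).
    exists u, v, (S i), j. repeat split; auto; [econstructor; eauto | lia].
  - exists x, y, 0%nat, n. repeat split; auto using walk0.
Qed.

Hypothesis adj_sym : forall x y, adj x y -> adj y x.

Lemma walk_rev x y n : walkn adj x y n -> walkn adj y x n.
Proof.
  induction 1 as [x | x y z n Axy W IH]; [constructor |].
  rewrite <- Nat.add_1_r. apply walk_cat with y; auto.
  econstructor; [apply adj_sym; exact Axy | constructor].
Qed.

Hypothesis conn : connected_graph adj.

Lemma gdist_walk x y : walkn adj x y (gdist adj x y).
Proof. destruct (conn x y) as [n W]. exact (proj1 (gdist_minimal x y n W)). Qed.

Lemma gdist_sym x y : gdist adj x y = gdist adj y x.
Proof. apply Nat.le_antisymm; apply gdist_le, walk_rev, gdist_walk. Qed.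

Lemma gdist_triangle x y z :
  INR (gdist adj x z) <= INR (gdist adj x y) + INR (gdist adj y z).
Proof.
  rewrite <- plus_INR. apply le_INR, gdist_le.
  apply walk_cat with y; apply gdist_walk.
Qed.

End Walks.

Section Skeleton.
Context {V : Type} (adj : V -> V -> Prop) (x0 : V) (lam k : R).
Hypothesis adj_sym : forall x y, adj x y -> adj y x.
Hypothesis conn : connected_graph adj.
Hypothesis lam_ge1 : 1 <= lam.

Local Notation d x y := (INR (gdist adj x y)).
Local Notation layer := (layer adj x0 lam).
Local Notation kseq := (kseq adj k).
Local Notation k_connected := (k_connected adj k).
Local Notation is_block := (is_block adj x0 lam k).
Local Notation block := (block adj x0 lam k).
Local Notation sk_adj := (sk_adj adj x0 lam k).

Lemma gdist_root_lipschitz x y : d y x0 <= d x x0 + d x y.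
Proof.
  pose proof (gdist_triangle adj conn y x x0).
  rewrite (gdist_sym adj adj_sym conn y x) in *. lra.
Qed.

Lemma layer_unique N N' x : layer N x -> layer N' x -> N = N'.
Proof.
  unfold Defs.layer. intros [A B] [C D].
  assert (IZR N < IZR (N' + 1)) by (rewrite plus_IZR; apply Rmult_lt_reg_r with lam; lra).
  assert (IZR N' < IZR (N + 1)) by (rewrite plus_IZR; apply Rmult_lt_reg_r with lam; lra).
  apply lt_IZR in H. apply lt_IZR in H0. lia.
Qed.

Lemma layer_gap N1 N2 x1 x2 :
  layer N1 x1 -> layer N2 x2 -> d x1 x2 < lam -> (N2 <= N1 + 1)%Z.
Proof.
  unfold Defs.layer. intros L1 L2 Hd.
  pose proof (gdist_root_lipschitz x1 x2).
  assert (IZR N2 < IZR (N1 + 2)).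
  { rewrite plus_IZR. apply Rmult_lt_reg_r with lam; lra. }
  apply lt_IZR in H0. lia.
Qed.

Lemma adjacent_layers_edge N x1 x2 : layer N x1 -> layer (N + 1) x2 ->
  exists u v, layer N u /\ layer (N + 1) v /\ adj u v /\
    (gdist adj x1 u <= gdist adj x1 x2)%nat /\
    (gdist adj v x2 <= gdist adj x1 x2)%nat.
Proof.
  unfold Defs.layer. rewrite plus_IZR. intros L1 L2.
  destruct (walk_exit adj (fun x => d x x0 <= (IZR N + 1) * lam) x1 x2 _
              (gdist_walk adj conn x1 x2) ltac:(lra) ltac:(lra))
    as (u & v & i & j & Wu & Pu & Auv & Pv & Wv & E).
  pose proof (gdist_root_lipschitz u v).
  pose proof (gdist_le_1 adj u v (or_intror Auv)) as Duv. apply le_INR in Duv.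
  pose proof (gdist_le adj _ _ _ Wu). pose proof (gdist_le adj _ _ _ Wv).
  (* crossing one edge moves the distance to x0 by at most 1 <= lambda *)
  rewrite INR_1 in Duv. exists u, v. repeat split; auto; try lra; lia.
Qed.

Lemma kseq_mono (X Y : V -> Prop) a b :
  (forall w, X w -> Y w) -> kseq X a b -> kseq Y a b.
Proof. intros S. induction 1; econstructor; eauto. Qed.

Lemma kseq_trans X a b c : kseq X a b -> kseq X b c -> kseq X a c.
Proof. induction 1; intros; auto. econstructor; eauto. Qed.

Lemma k_connected_union (X Y : V -> Prop) z :
  k_connected X -> k_connected Y -> X z -> Y z ->
  k_connected (fun w => X w \/ Y w).
Proof.
  intros CX CY Xz Yz.
  assert (HX : forall a b, X a -> X b -> kseq (fun w => X w \/ Y w) a b)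
    by (intros; apply kseq_mono with X; auto).
  assert (HY : forall a b, Y a -> Y b -> kseq (fun w => X w \/ Y w) a b)
    by (intros; apply kseq_mono with Y; auto).
  intros a b Ha Hb. apply kseq_trans with z; destruct Ha, Hb; auto.
Qed.

Lemma k_connected_pair x z : d x z <= k -> k_connected (fun w => w = x \/ w = z).
Proof.
  intros Hxz a b [-> | ->] [-> | ->]; try (constructor; auto).
  - apply kseqS with z; auto. constructor; auto.
  - apply kseqS with x; auto.
    + rewrite (gdist_sym adj adj_sym conn). exact Hxz.
    + constructor; auto.
Qed.

Lemma block_contains B C N z : is_block B -> B z -> C z ->
  (forall w, C w -> layer N w) -> k_connected C -> forall w, C w -> B w.
Proof.
  intros [N' [LB [_ [CB MaxB]]]] Bz Cz LC CC w Cw.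
  assert (N = N') as <- by (apply layer_unique with z; auto).
  apply (MaxB (fun w => B w \/ C w)); auto.
  - intros x [Bx | Cx]; auto.
  - apply k_connected_union with z; auto.
Qed.

Lemma block_absorbs B N x z : is_block B -> B x ->
  layer N x -> layer N z -> d x z <= k -> B z.
Proof.
  intros HB Bx Lx Lz Hxz.
  apply (block_contains B (fun w => w = x \/ w = z) N x); auto.
  - intros w [-> | ->]; auto.
  - now apply k_connected_pair.
Qed.

Lemma block_eq_of_common (b1 b2 : block) z :
  proj1_sig b1 z -> proj1_sig b2 z -> b1 = b2.
Proof.
  destruct b1 as [B1 H1], b2 as [B2 H2]; simpl. intros Z1 Z2.
  apply eq_sig_hprop; [intros; apply proof_irrelevance |]; simpl.
  apply functional_extensionality; intros w. apply propositional_extensionality.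
  pose proof H1 as [N1 [L1 [_ [C1 _]]]]. pose proof H2 as [N2 [L2 [_ [C2 _]]]].
  split; [apply (block_contains B2 B1 N1 z) | apply (block_contains B1 B2 N2 z)];
    auto.
Qed.

Lemma block_layer (b : block) x : proj1_sig b x ->
  exists N, layer N x /\ forall w, proj1_sig b w -> layer N w.
Proof. destruct (proj2_sig b) as [N [L _]]. eauto. Qed.

Lemma sk_adj_sym (b1 b2 : block) : sk_adj b1 b2 -> sk_adj b2 b1.
Proof. intros [Ne (x & y & Hx & Hy & A)]. split; eauto 7. Qed.

Section NearPoints.
Variables (b1 b2 : block) (x1 x2 : V).
Hypotheses (X1 : proj1_sig b1 x1) (X2 : proj1_sig b2 x2).
Hypothesis near : d x1 x2 < Rmin lam k.

Let near_k : d x1 x2 <= k.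
Proof. pose proof (Rmin_r lam k). lra. Qed.

Lemma near_points_same_layer N : layer N x1 -> layer N x2 -> b1 = b2.
Proof.
  intros L1 L2. apply block_eq_of_common with x2; auto.
  apply (block_absorbs _ N x1); auto. apply (proj2_sig b1).
Qed.

Lemma near_points_next_layer N :
  layer N x1 -> layer (N + 1) x2 -> sk_adj b1 b2.
Proof.
  intros L1 L2.
  destruct (adjacent_layers_edge N x1 x2 L1 L2) as (u & v & Lu & Lv & Auv & D1 & D2).
  apply le_INR in D1, D2.
  assert (Bu : proj1_sig b1 u).
  { apply (block_absorbs _ N x1); auto; [apply (proj2_sig b1) | lra]. }
  assert (Bv : proj1_sig b2 v).
  { apply (block_absorbs _ (N + 1) x2); auto; [apply (proj2_sig b2) |].
    rewrite (gdist_sym adj adj_sym conn). lra. }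
  split; [| eauto 6].
  intros <-. destruct (block_layer b1 u Bu) as [N' [_ L]].
  pose proof (layer_unique _ _ _ (L u Bu) Lu).
  pose proof (layer_unique _ _ _ (L v Bv) Lv). lia.
Qed.

End NearPoints.

Lemma near_points_blocks (b1 b2 : block) x1 x2 :
  proj1_sig b1 x1 -> proj1_sig b2 x2 -> d x1 x2 < Rmin lam k ->
  b1 = b2 \/ sk_adj b1 b2.
Proof.
  intros X1 X2 Hd.
  assert (Hd' : d x2 x1 < Rmin lam k) by now rewrite (gdist_sym adj adj_sym conn).
  pose proof (Rmin_l lam k).
  destruct (block_layer b1 x1 X1) as [N1 [L1 _]].
  destruct (block_layer b2 x2 X2) as [N2 [L2 _]].
  pose proof (layer_gap N1 N2 x1 x2 L1 L2 ltac:(lra)).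
  pose proof (layer_gap N2 N1 x2 x1 L2 L1 ltac:(lra)).
  assert (N2 = N1 \/ N2 = N1 + 1 \/ N1 = N2 + 1)%Z as [<- | [-> | ->]] by lia.
  - left. now apply (near_points_same_layer b1 b2 x1 x2 X1 X2 Hd N2).
  - right. now apply (near_points_next_layer b1 b2 x1 x2 X1 X2 Hd N1).
  - right. now apply sk_adj_sym, (near_points_next_layer b2 b1 x2 x1 X2 X1 Hd' N2).
Qed.

End Skeleton.

Theorem corollary8 (V : Type) (adj : V -> V -> Prop)
  (adj_sym : forall x y, adj x y -> adj y x)
  (adj_irr : forall x, ~ adj x x)
  (Gconn : connected_graph adj)
  (x0 : V) (lam k : R) (Hlam : 1 <= lam) (Hk : 1 <= k)
  (P1 P2 : list (block adj x0 lam k))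
  (HP1 : is_path (sk_adj adj x0 lam k) P1)
  (HP2 : is_path (sk_adj adj x0 lam k) P2)
  (Hfar : forall u v, In u P1 -> In v P2 ->
            (1 < gdist (sk_adj adj x0 lam k) u v)%nat) :
  let M := Rmin lam k in
  forall y : V,
    ~ (nbhd adj (preim adj x0 lam k P1) (M / 2) y /\
       nbhd adj (preim adj x0 lam k P2) (M / 2) y).
Proof.
  intros M y [[s1 [[b1 [Hb1 Hs1]] Hd1]] [s2 [[b2 [Hb2 Hs2]] Hd2]]].
  assert (Hd : INR (gdist adj s1 s2) < M).
  { pose proof (gdist_triangle adj Gconn s1 y s2) as T.
    rewrite (gdist_sym adj adj_sym Gconn y s2) in T. lra. }
  pose proof (Hfar b1 b2 Hb1 Hb2).
  pose proof (gdist_le_1 _ b1 b2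
    (near_points_blocks adj x0 lam k adj_sym Gconn Hlam b1 b2 s1 s2 Hs1 Hs2 Hd)).
  lia.
Qed.
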